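(* Fix $\phi\in\mathbb{R}^d$ with $\mu=\|\phi\|^2>0$, a ground-truth class $y\in[V]$ with one-hot label ${\bm y}={\bm e}_y$, softmax cross-entropy $f({\bm z},{\bm y})=-\sum_k y_k\log p_k({\bm z})$ (with $L$ a uniform bound on the norms of its first three ${\bm z}$-derivatives), $\kappa\ge0$, and ${\bm W}^t\in\mathbb{R}^{V\times d}$. Let ${\bm z}^t={\bm W}^t\phi$, ${\bm p}^t=\mathrm{softmax}({\bm z}^t)$, ${\bm g}^t={\bm p}^t-{\bm y}$, ${\bm H}^t_{{\bm z}}=\mathrm{diag}({\bm p}^t)-{\bm p}^t({\bm p}^t)^\top$, $y^*=\arg\max_{j\neq y}p_j^t$. Let $S=p^t_y+p^t_{y^*}$, $\tau=1-S$, $\bar p_y=p^t_y/S$, $\Delta_{\mathrm{bin}}(\bar p_y)=4\bar p_y(1-\bar p_y)^2$, $B=\sqrt2$, and assume there exists $\gamma_0>0$ with $$\frac{4Be^2}{p^t_{y^*}}\tau\le\gamma_0\le\Delta_{\mathrm{bin}}(\bar p_y)-6\tau.$$ For step size $\eta$ with $|\eta|\in(0,1]$ take $|\rho|=\kappa\sqrt{|\eta|}$, set $\eta'=\eta\mu$ and $\tilde\rho^{\,t}=\rho\sqrt\mu/\|{\bm g}^t\|$ ($0$ if ${\bm g}^t=0$), and assume the sign condition $\eta'\tilde\rho^{\,t}>0$. With $F({\bm W})=f({\bm W}\phi,{\bm y})$, define ${\bm W}^{t+1}(\mathrm{GD})={\bm W}^t-\eta\nabla F({\bm W}^t)$, ${\bm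 W}^{t+1}(\mathrm{SAM})={\bm W}^t-\eta\nabla F({\bm W}^t+\rho\nabla F({\bm W}^t)/\|\nabla F({\bm W}^t)\|)$, and $\alpha_i^{(a)}=p_i^{t+1}(a)/p_i^t$ with ${\bm p}^{t+1}(a)=\mathrm{softmax}({\bm W}^{t+1}(a)\phi)$. Then there exists $\eta_0>0$, depending only on $({\bm p}^t,{\bm H}^t_{{\bm z}},\|{\bm g}^t\|,\mu,\kappa,L,\gamma_0)$, such that for all $0<|\eta|\le\eta_0$, $$\alpha^{\mathrm{SAM}}_y\ge\alpha^{\mathrm{GD}}_y.$$ Moreover the inequality is strict whenever $\tilde\rho^{\,t}\neq0$ and $p^t_{y^*}\in(0,1)$, and equality holds when $\tilde\rho^{\,t}=0$.
   Context: $\|\cdot\|$ is Euclidean/Frobenius norm; $\nabla F({\bm W})=({\bm p}({\bm W}\phi)-{\bm y})\phi^\top$. $\alpha_i$ is the one-step confidence ratio of class $i$. *)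

From HB Require Import structures.
From mathcomp Require Import all_boot all_order all_algebra.
From mathcomp Require Import all_classical all_reals.
From mathcomp Require Import sequences exp.
Set Implicit Arguments. Unset Strict Implicit. Unset Printing Implicit Defensive.
Import Order.TTheory GRing.Theory Num.Theory.
Local Open Scope ring_scope.

Section Defs.
Variables (R : realType) (V d : nat).

Definition softmax (z : 'cV[R]_V) : 'cV[R]_V :=
  \col_i (expR (z i 0) / \sum_(j < V) expR (z j 0)).

Definition onehot (y : 'I_V) : 'cV[R]_V := \col_i (i == y)%:R.

Definition fnorm m n (A : 'M[R]_(m, n)) : R :=
  Num.sqrt (\sum_(i < m) \sum_(j < n) A i j ^+ 2).

(* gradient of F(W) = f(W phi, e_y):  (p(W phi) - e_y) phi^T *)
Definition gradF (phi : 'cV[R]_d) (y : 'I_V) (W : 'M[R]_(V, d)) : 'M[R]_(V, d) :=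
  (softmax (W *m phi) - onehot y) *m phi^T.

Definition gd_step (eta : R) phi y (W : 'M[R]_(V, d)) : 'M[R]_(V, d) :=
  W - eta *: gradF phi y W.

Definition sam_step (eta rho : R) phi y (W : 'M[R]_(V, d)) : 'M[R]_(V, d) :=
  W - eta *: gradF phi y (W + (rho / fnorm (gradF phi y W)) *: gradF phi y W).

Definition alpha (phi : 'cV[R]_d) (W Wnext : 'M[R]_(V, d)) (i : 'I_V) : R :=
  softmax (Wnext *m phi) i 0 / softmax (W *m phi) i 0.

Definition rho_tilde (rho mu : R) (g : 'cV[R]_V) : R :=
  if g == 0 then 0 else rho * Num.sqrt mu / fnorm g.

End Defs.

Definition Delta_bin (R : realType) (q : R) : R := 4 * q * (1 - q) ^+ 2.

(* With c = eta mu, a step z' = z - c v of the logits gives the confidence ratio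
   alpha_y = 1 / sum_k p_k exp (- c (v_k - v_y)); GD takes v = g = p - e_y, SAM takes
   v = softmax (z + rt g) - e_y, and softmax (z + rt g) is the exponential tilt q of p by
   e^{rt g}.  Tilting moves the mean of g by Cov_p (g, e^{rt g}) / E_p e^{rt g}, so that
   rt (E_q g - E_p g) >= rt^2 p_y (1 - p_y)^3 / 8: the pairs (y, j) alone contribute this
   much, as g_j - g_y >= 1 - p_y.  To first order in c the SAM denominator is smaller by
   c (E_q g - E_p g) >= c rt p_y (1 - p_y)^3 / 8, and the second-order error is at most
   8 c^2; as c ~ eta while rt ~ kappa sqrt |eta|, the gain wins once |eta| is small. *)

From HB Require Import structures.
From mathcomp Require Import all_boot all_order all_algebra.
From mathcomp Require Import all_classical all_reals.
From mathcomp Require Import sequences exp.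
From mathcomp Require Import ring lra.
Set Implicit Arguments. Unset Strict Implicit. Unset Printing Implicit Defensive.
Import Order.TTheory GRing.Theory Num.Theory.
Local Open Scope ring_scope.

Section ExpBounds.
Variable R : realType.

Lemma expR_le_quadratic (x : R) : x <= 1/2 -> expR x <= 1 + x + 2 * x ^+ 2.
Proof.
move=> x_le.
have expRN_ge := expR_ge1Dx (- x).
rewrite -[x]opprK expRN opprK.
apply: (@le_trans _ _ (1 - x)^-1).
  by rewrite lef_pV2 ?posrE ?expR_gt0 //; lra.
rewrite -[(1 - x)^-1]mul1r ler_pdivrMr; last lra.
have : 0 <= x ^+ 2 * (1 - 2 * x) by apply: mulr_ge0; [exact: sqr_ge0 | lra].
nra.
Qed.

Lemma expR_scale_increment_ge0 (r u v : R) :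
  0 <= (u - v) * (r * (expR (r * u) - expR (r * v))).
Proof.
have -> : (u - v) * (r * (expR (r * u) - expR (r * v))) =
          (r * u - r * v) * (expR (r * u) - expR (r * v)) by ring.
have [le_uv | lt_vu] := lerP (r * u) (r * v).
  by apply: mulr_le0; [lra | rewrite subr_le0 ler_expR].
by apply: mulr_ge0; [lra | rewrite subr_ge0 ler_expR ltW].
Qed.

Lemma expR_scale_increment_ge (r u v : R) :
  v <= u -> `|r * u| <= 1/2 -> `|r * v| <= 1/2 ->
  r ^+ 2 * (u - v) / 2 <= r * (expR (r * u) - expR (r * v)).
Proof.
move=> le_vu; rewrite !ler_norml => /andP[ru_ge ru_le] /andP[rv_ge rv_le].
have expR_ru := expR_ge1Dx (r * u); have expR_rv := expR_ge1Dx (r * v).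
have [r_ge0 | r_lt0] := lerP 0 r.
  (* e^{ru} - e^{rv} >= e^{rv} (ru - rv) by convexity, and e^{rv} >= 1/2 *)
  have : expR (r * v) * (1 + (r * u - r * v)) <= expR (r * v) * expR (r * u - r * v).
    by rewrite ler_pM2l ?expR_gt0 // expR_ge1Dx.
  rewrite -expRD (_ : r * v + (r * u - r * v) = r * u); last ring.
  have : 0 <= (expR (r * v) - 1/2) * (r ^+ 2 * (u - v)).
    by apply: mulr_ge0; [lra | apply: mulr_ge0; [exact: sqr_ge0 | lra]].
  have : 0 <= r * (u - v) by apply: mulr_ge0; lra.
  nra.
have : expR (r * u) * (1 + (r * v - r * u)) <= expR (r * u) * expR (r * v - r * u).
  by rewrite ler_pM2l ?expR_gt0 // expR_ge1Dx.
rewrite -expRD (_ : r * u + (r * v - r * u) = r * v); last ring.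
have : 0 <= (expR (r * u) - 1/2) * (r ^+ 2 * (u - v)).
  by apply: mulr_ge0; [lra | apply: mulr_ge0; [exact: sqr_ge0 | lra]].
have : 0 <= - r * (u - v) by apply: mulr_ge0; lra.
nra.
Qed.

End ExpBounds.

Lemma sum_indicator_mul (R : nzRingType) (V : nat) (y : 'I_V) (F : 'I_V -> R) :
  \sum_j (j == y)%:R * F j = F y.
Proof. by rewrite (bigD1 y) //= eqxx mul1r big1 ?addr0 // => j /negbTE ->; rewrite mul0r. Qed.

Section ProbabilityVector.
Variables (R : realType) (V : nat) (p : 'I_V -> R).
Hypotheses (p_gt0 : forall j, 0 < p j) (p_sum1 : \sum_j p j = 1).

Lemma prob_le1 j : p j <= 1.
Proof.
rewrite -p_sum1 (bigD1 j) //= lerDl.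
by apply: sumr_ge0 => k _; exact: ltW.
Qed.

Lemma sum_prob_neq (y : 'I_V) : \sum_(j | j != y) p j = 1 - p y.
Proof. by rewrite -p_sum1 [in RHS](bigD1 y) //=; ring. Qed.

Lemma covariance_pairwise (g h : 'I_V -> R) :
  2 * (\sum_j p j * g j * h j - (\sum_j p j * g j) * (\sum_j p j * h j)) =
  \sum_i \sum_j p i * p j * (g i - g j) * (h i - h j).
Proof.
set Eg := \sum_j p j * g j; set Eh := \sum_j p j * h j; set Egh := \sum_j p j * g j * h j.
have row i : \sum_j p i * p j * (g i - g j) * (h i - h j) =
    p i * g i * h i - p i * g i * Eh - p i * h i * Eg + p i * Egh.
  rewrite -[p i * g i * h i]mulr1 -p_sum1 /Eg /Eh /Egh !mulr_sumr -!sumrB -big_split.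
  by apply: eq_bigr => j _ /=; ring.
under eq_bigr do rewrite row.
rewrite big_split /= !sumrB -!mulr_suml p_sum1 -/Eg -/Eh -/Egh.
ring.
Qed.

Lemma mean_expR_linearize (c : R) (u v : 'I_V -> R) :
  `|c| <= 1/4 -> (forall j, `|u j| <= 2) ->
  c * \sum_j p j * (u j - v j) - 8 * c ^+ 2 <=
  \sum_j p j * expR (- c * v j) - \sum_j p j * expR (- c * u j).
Proof.
move=> c_small u_bound.
have -> : 8 * c ^+ 2 = \sum_j 8 * c ^+ 2 * p j by rewrite -mulr_sumr p_sum1 mulr1.
rewrite -sumrB mulr_sumr -sumrB.
apply: ler_sum => j _.
have u_sq : (c * u j) ^+ 2 <= 4 * c ^+ 2.
  rewrite exprMn -[u j ^+ 2](real_normK (num_real _)) mulrC ler_wpM2r ?sqr_ge0 //.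
  by have := normr_ge0 (u j); have := u_bound j; nra.
have cu_small : - c * u j <= 1/2.
  apply: (le_trans (ler_norm _)); rewrite normrM normrN.
  by have := normr_ge0 (u j); have := normr_ge0 c; have := u_bound j; nra.
have := expR_le_quadratic cu_small.
have := expR_ge1Dx (- c * v j).
have -> : (- c * u j) ^+ 2 = (c * u j) ^+ 2 by ring.
move=> expR_v expR_u.
have : c * (u j - v j) - 8 * c ^+ 2 <= expR (- c * v j) - expR (- c * u j) by lra.
move/(ler_wpM2l (ltW (p_gt0 j))); lra.
Qed.

Definition tilt (w : 'I_V -> R) (j : 'I_V) : R :=
  p j * expR (w j) / \sum_k p k * expR (w k).

Lemma tilt_partition_gt0 (w : 'I_V -> R) (j : 'I_V) : 0 < \sum_k p k * expR (w k).
Proof.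
rewrite (bigD1 j) //=; apply: ltr_pwDl; first by rewrite mulr_gt0 ?expR_gt0.
by apply: sumr_ge0 => k _; rewrite mulr_ge0 ?expR_ge0 // ltW.
Qed.

Lemma tilt_gt0 (w : 'I_V -> R) j : 0 < tilt w j.
Proof. by rewrite divr_gt0 ?mulr_gt0 ?expR_gt0 ?(tilt_partition_gt0 w j). Qed.

Lemma tilt_sum1 (w : 'I_V -> R) (j : 'I_V) : \sum_k tilt w k = 1.
Proof. by rewrite -mulr_suml divff // gt_eqF // (tilt_partition_gt0 w j). Qed.

Lemma tilt_ratio (w : 'I_V -> R) y :
  tilt w y / p y = (\sum_k p k * expR (w k - w y))^-1.
Proof.
have Z_gt0 := tilt_partition_gt0 w y; have := p_gt0 y; have := expR_gt0 (w y).
have -> : \sum_k p k * expR (w k - w y) = (\sum_k p k * expR (w k)) / expR (w y).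
  by rewrite mulr_suml; apply: eq_bigr => k _; rewrite expRD expRN mulrA.
by rewrite /tilt => ? ?; field; rewrite !gt_eqF.
Qed.

Lemma tilt_mean_shift (g w : 'I_V -> R) (j0 : 'I_V) :
  2 * ((\sum_j g j * tilt w j - \sum_j g j * p j) * \sum_k p k * expR (w k)) =
  \sum_i \sum_j p i * p j * (g i - g j) * (expR (w i) - expR (w j)).
Proof.
rewrite -covariance_pairwise mulrBl; congr (2 * (_ - _)); last first.
  by congr (_ * _); apply: eq_bigr => j _; rewrite mulrC.
rewrite mulr_suml; apply: eq_bigr => j _.
rewrite /tilt mulrA divfK ?gt_eqF ?(tilt_partition_gt0 w j0) //; ring.
Qed.

Section LogitGrad.
Variable y : 'I_V.

Definition logit_grad (j : 'I_V) : R := p j - (j == y)%:R.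

Lemma logit_grad_bound j : `|logit_grad j| <= 1.
Proof.
rewrite /logit_grad ler_norml; have := p_gt0 j; have := prob_le1 j.
by case: (j == y) => /=; lra.
Qed.

Section SmallTilt.
Variable r : R.
Hypothesis r_small : `|r| <= 1/2.

Lemma scaled_logit_grad_small j : `|r * logit_grad j| <= 1/2.
Proof.
rewrite normrM; apply: le_trans r_small.
by rewrite -[leRHS]mulr1 ler_wpM2l ?logit_grad_bound.
Qed.

Lemma expR_scaled_logit_grad_le2 j : expR (r * logit_grad j) <= 2.
Proof.
have := scaled_logit_grad_small j; rewrite ler_norml => /andP[_ small].
have := expR_le_quadratic small.
have : (r * logit_grad j) ^+ 2 <= 1/4.
  rewrite -[_ ^+ 2](real_normK (num_real _)).
  by have := scaled_logit_grad_small j; have := normr_ge0 (r * logit_grad j); nra.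
lra.
Qed.

Lemma tilt_pair_gain j : j != y ->
  (1 - p y) ^+ 2 * r ^+ 2 / 2 <=
  (logit_grad j - logit_grad y) * (r * (expR (r * logit_grad j) - expR (r * logit_grad y))).
Proof.
move=> neq_jy; have py_le1 := prob_le1 y; have pj_gt0 := p_gt0 j.
have gap : logit_grad j - logit_grad y = 1 - p y + p j.
  by rewrite /logit_grad eqxx (negbTE neq_jy) /=; ring.
have le_grad : logit_grad y <= logit_grad j by rewrite -subr_ge0 gap; lra.
have := expR_scale_increment_ge le_grad (scaled_logit_grad_small j) (scaled_logit_grad_small y).
rewrite gap => expR_gain.
have : (1 - p y) ^+ 2 <= (1 - p y + p j) ^+ 2 by rewrite ler_pXn2r ?nnegrE //; lra.
have := sqr_ge0 r; nra.
Qed.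

Lemma tilt_gain :
  r ^+ 2 * (p y * (1 - p y) ^+ 3) / 8 <=
  r * (\sum_j logit_grad j * tilt (fun k => r * logit_grad k) j - \sum_j logit_grad j * p j).
Proof.
set g := logit_grad; set E := (X in r * X).
pose h k := expR (r * g k); pose Z := \sum_k p k * h k.
have Z_gt0 : 0 < Z := tilt_partition_gt0 _ y.
have Z_le2 : Z <= 2.
  apply: (@le_trans _ _ (\sum_k p k * 2)); last by rewrite -mulr_suml p_sum1 mul1r.
  by apply: ler_sum => k _; rewrite ler_wpM2l ?expR_scaled_logit_grad_le2 // ltW.
pose T i j := p i * p j * ((g i - g j) * (r * (h i - h j))).
have T_ge0 i j : 0 <= T i j.
  by rewrite mulr_ge0 ?expR_scale_increment_ge0 // mulr_ge0 // ltW.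
have ET : 2 * (r * E * Z) = \sum_i \sum_j T i j.
  rewrite -mulrA mulrCA tilt_mean_shift // mulr_sumr; apply: eq_bigr => i _.
  by rewrite mulr_sumr; apply: eq_bigr => j _; rewrite /T /h; ring.
have row_gain : r ^+ 2 * (p y * (1 - p y) ^+ 3) / 2 <= \sum_j T y j.
  have -> : \sum_j T y j = \sum_(j | j != y) T y j.
    by rewrite (bigD1 y) //= /T !subrr mul0r mulr0 add0r.
  have -> : r ^+ 2 * (p y * (1 - p y) ^+ 3) / 2 =
            \sum_(j | j != y) p y * p j * ((1 - p y) ^+ 2 * r ^+ 2 / 2).
    by rewrite -mulr_suml -mulr_sumr sum_prob_neq; ring.
  apply: ler_sum => j neq_jy; apply: ler_wpM2l; first by rewrite mulr_ge0 // ltW.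
  rewrite (_ : (g y - g j) * _ = (g j - g y) * (r * (h j - h y))); last by ring.
  exact: tilt_pair_gain.
have row_le : \sum_j T y j <= \sum_i \sum_j T i j.
  rewrite [leRHS](bigD1 y) //= lerDl.
  by apply: sumr_ge0 => i _; apply: sumr_ge0 => j _.
have rE_ge0 : 0 <= r * E.
  rewrite -(pmulr_lge0 _ Z_gt0).
  have : 0 <= \sum_i \sum_j T i j by apply: sumr_ge0 => i _; apply: sumr_ge0 => j _.
  lra.
have : 0 <= 2 - Z by rewrite subr_ge0.
move/(mulr_ge0 rE_ge0).
nra.
Qed.

End SmallTilt.
End LogitGrad.

End ProbabilityVector.
Section TiltedDescent.
Variables (R : realType) (V : nat) (p : 'I_V -> R) (y : 'I_V).
Hypotheses (p_gt0 : forall j, 0 < p j) (p_sum1 : \sum_j p j = 1).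

Lemma tilt_tilt (u w : 'I_V -> R) j :
  tilt (tilt p u) w j = tilt p (fun k => u k + w k) j.
Proof.
have Zu_gt0 : 0 < \sum_k p k * expR (u k) := tilt_partition_gt0 p_gt0 _ j.
have Zuw_gt0 : 0 < \sum_k p k * expR (u k + w k) := tilt_partition_gt0 p_gt0 _ j.
rewrite /tilt; set Zu := \sum_k p k * expR (u k).
have -> : \sum_k p k * expR (u k) / Zu * expR (w k) = (\sum_k p k * expR (u k + w k)) / Zu.
  by rewrite mulr_suml; apply: eq_bigr => k _; rewrite expRD; ring.
by rewrite expRD; field; rewrite !gt_eqF.
Qed.

Lemma mean_logit_grad_gap (q : 'I_V -> R) :
  \sum_j p j * ((logit_grad q y j - logit_grad q y y) - (logit_grad p y j - logit_grad p y y)) =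
  \sum_j logit_grad p y j * q j - \sum_j logit_grad p y j * p j.
Proof.
have -> : \sum_j logit_grad p y j * q j - \sum_j logit_grad p y j * p j =
          \sum_j p j * (q j - p j) - \sum_j (j == y)%:R * (q j - p j).
  by rewrite -!sumrB; apply: eq_bigr => j _; rewrite /logit_grad; ring.
have -> : \sum_j (j == y)%:R * (q j - p j) = \sum_j p j * (q y - p y).
  by rewrite sum_indicator_mul -mulr_suml p_sum1 mul1r.
rewrite -sumrB.
by apply: eq_bigr => j _; rewrite /logit_grad eqxx; ring.
Qed.

Lemma tilted_descent_sum_lt (c r : R) :
  0 < c * r -> `|c| <= 1/4 -> `|r| <= 1/2 ->
  64 * `|c| < `|r| * (p y * (1 - p y) ^+ 3) ->
  let gt := logit_grad (tilt p (fun k => r * logit_grad p y k)) y in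
  \sum_j p j * expR (- c * (gt j - gt y)) <
  \sum_j p j * expR (- c * (logit_grad p y j - logit_grad p y y)).
Proof.
move=> cr_gt0 c_small r_small dominated /=.
set q := tilt p _.
have q_gt0 : forall j, 0 < q j := tilt_gt0 p_gt0 _.
have q_sum1 : \sum_j q j = 1 := tilt_sum1 p_gt0 _ y.
have u_bound j : `|logit_grad q y j - logit_grad q y y| <= 2.
  apply: (le_trans (ler_normB _ _)).
  by have := logit_grad_bound q_gt0 q_sum1 y j; have := logit_grad_bound q_gt0 q_sum1 y y; lra.
have := mean_expR_linearize p_gt0 p_sum1
  (fun j => logit_grad p y j - logit_grad p y y) c_small u_bound.
rewrite mean_logit_grad_gap.
have gain := tilt_gain p_gt0 p_sum1 y r_small; rewrite -/q in gain.
set a := p y * _ in dominated gain *.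
set E := \sum_j logit_grad p y j * q j - _.
have gain_c : c * r * a / 8 <= c * E.
  have r_neq0 : r != 0 by apply: contraTneq cr_gt0 => ->; rewrite mulr0 ltxx.
  have r2_gt0 : 0 < r ^+ 2 by rewrite exprn_even_gt0.
  rewrite -(ler_pM2l r2_gt0).
  have -> : r ^+ 2 * (c * r * a / 8) = c * r * (r ^+ 2 * a / 8) by ring.
  have -> : r ^+ 2 * (c * E) = c * r * (r * E) by ring.
  by rewrite ler_wpM2l // ltW.
have : 8 * c ^+ 2 < c * r * a / 8.
  have c_gt0 : 0 < `|c| by rewrite normr_gt0; apply: contraTneq cr_gt0 => ->; rewrite mul0r ltxx.
  rewrite -[c * r]gtr0_norm // normrM -[c ^+ 2]real_normK ?num_real //.
  have := ltr_pM2l c_gt0; nra.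
lra.
Qed.

End TiltedDescent.

Section Softmax.
Variables (R : realType) (V : nat).
Implicit Types (z w : 'cV[R]_V) (y : 'I_V).

Lemma softmax_tilt_uniform z j : softmax z j 0 = tilt (fun=> 1) (fun k => z k 0) j.
Proof. by rewrite mxE /tilt mul1r; under [in RHS]eq_bigr do rewrite mul1r. Qed.

Lemma softmax_gt0 z j : 0 < softmax z j 0.
Proof. by rewrite softmax_tilt_uniform tilt_gt0. Qed.

Lemma softmax_sum1 z (j : 'I_V) : \sum_k softmax z k 0 = 1.
Proof. by under eq_bigr do rewrite softmax_tilt_uniform; apply: tilt_sum1 j. Qed.

Lemma softmax_lt1 z i j : j != i -> softmax z i 0 < 1.
Proof.
move=> neq_ji; rewrite -(softmax_sum1 z i) (bigD1 i) //= ltrDl (bigD1 j) //=.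
by rewrite ltr_pwDl ?softmax_gt0 // sumr_ge0 // => k _; rewrite ltW ?softmax_gt0.
Qed.

Lemma softmax_shift z w j :
  softmax (z + w) j 0 = tilt (fun k => softmax z k 0) (fun k => w k 0) j.
Proof.
have -> : (fun k => softmax z k 0) = tilt (fun=> 1) (fun k => z k 0).
  by apply/funext => k; rewrite softmax_tilt_uniform.
rewrite tilt_tilt // softmax_tilt_uniform; congr tilt.
by apply/funext => k; rewrite mxE.
Qed.

Lemma softmax_shift_ratio z w y :
  softmax (z + w) y 0 / softmax z y 0 = (\sum_k softmax z k 0 * expR (w k 0 - w y 0))^-1.
Proof. by rewrite softmax_shift tilt_ratio //; exact: softmax_gt0. Qed.

Lemma softmax_sub_onehot z y k :
  (softmax z - onehot R y) k 0 = logit_grad (fun j => softmax z j 0) y k.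
Proof. by rewrite /logit_grad mxE; congr (_ + _); rewrite !mxE. Qed.

Lemma softmax_sub_onehot_neq0 z i j : j != i -> softmax z - onehot R i != 0.
Proof.
move=> neq_ji; apply: contraTneq (softmax_lt1 z neq_ji) => /matrixP/(_ i 0).
by rewrite softmax_sub_onehot mxE /logit_grad eqxx => /eqP; rewrite subr_eq0 => /eqP ->; rewrite ltxx.
Qed.

End Softmax.

Section Frobenius.
Variable R : realType.

Lemma fnorm_sq m n (A : 'M[R]_(m, n)) : fnorm A ^+ 2 = \sum_i \sum_j A i j ^+ 2.
Proof. by rewrite sqr_sqrtr // !sumr_ge0 // => i _; rewrite sumr_ge0 // => j _; rewrite sqr_ge0. Qed.

Lemma fnorm_ge0 m n (A : 'M[R]_(m, n)) : 0 <= fnorm A.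
Proof. exact: sqrtr_ge0. Qed.

Lemma fnorm_gt0 m n (A : 'M[R]_(m, n)) : A != 0 -> 0 < fnorm A.
Proof.
move=> A_neq0; have [i [j Aij_neq0]] : exists i j, A i j != 0.
  apply: contraNP A_neq0 => all0; apply/eqP/matrixP => i j; rewrite mxE.
  by case: (eqVneq (A i j) 0) => // Aij; case: all0; exists i, j.
rewrite sqrtr_gt0 (bigD1 i) //= (bigD1 j) //= -addrA ltr_pwDl ?exprn_even_gt0 //.
by rewrite addr_ge0 ?sumr_ge0 // => [k _|k _]; rewrite ?sumr_ge0 // => *; rewrite sqr_ge0.
Qed.

Lemma fnorm_outer V d (v : 'cV[R]_V) (phi : 'cV[R]_d) :
  fnorm (v *m phi^T) = fnorm v * fnorm phi.
Proof.
rewrite /fnorm -sqrtrM ?sumr_ge0 // => [|i _]; last by rewrite sumr_ge0 // => j _; rewrite sqr_ge0.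
congr Num.sqrt; rewrite mulr_suml; apply: eq_bigr => i _.
rewrite big_ord1 mulr_sumr; apply: eq_bigr => j _.
by rewrite big_ord1 !mxE big_ord1 mxE exprMn.
Qed.

Lemma trmx_mul_self d (phi : 'cV[R]_d) : phi^T *m phi = (fnorm phi ^+ 2)%:M.
Proof.
apply/matrixP => i j; rewrite !ord1 !mxE eqxx mulr1n fnorm_sq.
by apply: eq_bigr => k _; rewrite big_ord1 !mxE expr2.
Qed.

Lemma mulmx_rank_one_update V d (W : 'M[R]_(V, d)) (v : 'cV[R]_V) (phi : 'cV[R]_d) (a : R) :
  (W + a *: (v *m phi^T)) *m phi = W *m phi + (a * fnorm phi ^+ 2) *: v.
Proof. by rewrite mulmxDl -scalemxAl -mulmxA trmx_mul_self mul_mx_scalar scalerA. Qed.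

End Frobenius.

Section Steps.
Variables (R : realType) (V d : nat) (phi : 'cV[R]_d) (y : 'I_V) (W : 'M[R]_(V, d)).

Lemma alpha_descent (eta : R) (v : 'cV[R]_V) :
  alpha phi W (W - eta *: (v *m phi^T)) y =
  (\sum_k softmax (W *m phi) k 0 * expR (- (eta * fnorm phi ^+ 2) * (v k 0 - v y 0)))^-1.
Proof.
rewrite /alpha -scaleNr mulmx_rank_one_update softmax_shift_ratio.
by congr (_^-1); apply: eq_bigr => k _; rewrite !mxE; congr (_ * expR _); ring.
Qed.

Lemma alpha_descent_logit_grad (eta : R) (z : 'cV[R]_V) :
  let gz := logit_grad (fun j => softmax z j 0) y in
  alpha phi W (W - eta *: ((softmax z - onehot R y) *m phi^T)) y =
  (\sum_k softmax (W *m phi) k 0 * expR (- (eta * fnorm phi ^+ 2) * (gz k - gz y)))^-1.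
Proof.
move=> gz; rewrite alpha_descent.
by under eq_bigr do rewrite !softmax_sub_onehot.
Qed.

Lemma rho_tilde_sqr (rho mu : R) (g : 'cV[R]_V) : g != 0 -> 0 <= mu ->
  rho_tilde rho mu g ^+ 2 * fnorm g ^+ 2 = rho ^+ 2 * mu.
Proof.
move=> g_neq0 mu_ge0; have := fnorm_gt0 g_neq0.
by rewrite /rho_tilde (negbTE g_neq0) => ?; rewrite !exprMn sqr_sqrtr //; field; rewrite gt_eqF.
Qed.

Lemma sam_perturbed_logits (rho : R) :
  let g := softmax (W *m phi) - onehot R y in
  g != 0 -> 0 < fnorm phi ->
  (W + (rho / fnorm (gradF phi y W)) *: gradF phi y W) *m phi =
  W *m phi + rho_tilde rho (fnorm phi ^+ 2) g *: g.
Proof.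
move=> g g_neq0 phi_gt0; have g_gt0 := fnorm_gt0 g_neq0.
rewrite /gradF -/g mulmx_rank_one_update fnorm_outer /rho_tilde (negbTE g_neq0).
by rewrite sqrtr_sqr ger0_norm ?fnorm_ge0 //; congr (_ + _ *: _); field; rewrite !gt_eqF.
Qed.

Lemma alpha_gd_lt_sam (eta rho : R) :
  let mu := fnorm phi ^+ 2 in
  let g := softmax (W *m phi) - onehot R y in
  let rt := rho_tilde rho mu g in
  let py := softmax (W *m phi) y 0 in
  g != 0 -> 0 < fnorm phi -> 0 < eta * mu * rt ->
  `|eta * mu| <= 1/4 -> `|rt| <= 1/2 -> 64 * `|eta * mu| < `|rt| * (py * (1 - py) ^+ 3) ->
  alpha phi W (gd_step eta phi y W) y < alpha phi W (sam_step eta rho phi y W) y.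
Proof.
move=> mu g rt py g_neq0 phi_gt0 c_rt_gt0 c_small rt_small dominated.
set p := fun k => softmax (W *m phi) k 0.
have p_gt0 : forall k, 0 < p k := softmax_gt0 _.
have tilted : (fun k => softmax (W *m phi + rt *: g) k 0) =
              tilt p (fun k => rt * logit_grad p y k).
  apply/funext => k; rewrite softmax_shift; congr tilt.
  by apply/funext => j; rewrite mxE softmax_sub_onehot.
rewrite /sam_step {1}/gradF sam_perturbed_logits // /gd_step /gradF.
rewrite !alpha_descent_logit_grad tilted ltf_pV2 ?posrE ?tilt_partition_gt0 //.
exact (tilted_descent_sum_lt p_gt0 (softmax_sum1 _ y) c_rt_gt0 c_small rt_small dominated).
Qed.

End Steps.

(* Small enough for |eta mu| <= 1/4, |rt| <= 1/2 and 64 |eta mu| < |rt| a; the last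
   constraint is void when kappa = 0, since then rt = 0. *)
Definition step_bound (R : realType) (mu n kappa a : R) : R :=
  Num.min (4 * mu)^-1 (Num.min (n / (4 * (kappa ^+ 2 + 1) * mu))
    (if kappa == 0 then 1 else kappa ^+ 2 * a ^+ 2 / (8192 * mu * n))).

Section StepSize.
Variables (R : realType) (mu n kappa a : R).
Hypotheses (mu_gt0 : 0 < mu) (n_gt0 : 0 < n) (a_gt0 : 0 < a).

Lemma step_bound_gt0 : 0 < step_bound mu n kappa a.
Proof.
have denom_gt0 : 0 < 4 * (kappa ^+ 2 + 1) * mu by rewrite !mulr_gt0 // ltr_wpDl ?sqr_ge0.
rewrite /step_bound !lt_min invr_gt0 mulr_gt0 // divr_gt0 //=.
case: eqP => // /eqP kappa_neq0.
have kappa2_gt0 : 0 < kappa ^+ 2 by rewrite exprn_even_gt0.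
apply: divr_gt0; first by apply: mulr_gt0 => //; apply: exprn_gt0.
by rewrite !mulr_gt0.
Qed.

Variables (eta rt : R).
Hypotheses (eta_le : `|eta| <= step_bound mu n kappa a)
  (rt_sqr : rt ^+ 2 * n = kappa ^+ 2 * `|eta| * mu).

Lemma step_le_quarter : `|eta * mu| <= 1/4.
Proof.
move: eta_le; rewrite /step_bound !le_min => /andP[eta_le1 _].
rewrite normrM (gtr0_norm mu_gt0).
have <- : (4 * mu)^-1 * mu = 1/4 by field; rewrite gt_eqF.
by rewrite ler_wpM2r // ltW.
Qed.

Lemma radius_le_half : `|rt| <= 1/2.
Proof.
move: eta_le; rewrite /step_bound !le_min => /andP[_ /andP[eta_le2 _]].
have : `|eta| * (4 * (kappa ^+ 2 + 1) * mu) <= n.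
  by rewrite -ler_pdivlMr // !mulr_gt0 // ltr_wpDl ?sqr_ge0.
move=> eta_small; have : `|rt| ^+ 2 * n <= 1/4 * n.
  rewrite real_normK ?num_real // rt_sqr.
  have : 0 <= `|eta| * mu by rewrite mulr_ge0 // ltW.
  lra.
rewrite ler_pM2r //; have := normr_ge0 rt; nra.
Qed.

Lemma step_dominated : 0 < `|eta| -> rt != 0 -> 64 * `|eta * mu| < `|rt| * a.
Proof.
move=> eta_gt0 rt_neq0.
have kappa_neq0 : kappa != 0.
  apply: contra_neq rt_neq0 => kappa0.
  have : rt ^+ 2 * n == 0 by rewrite rt_sqr kappa0 expr0n !mul0r.
  by rewrite mulf_eq0 sqrf_eq0 (gt_eqF n_gt0) orbF => /eqP.
move: eta_le; rewrite /step_bound !le_min (negbTE kappa_neq0) => /andP[_ /andP[_ eta_le3]].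
have : `|eta| * (8192 * mu * n) <= kappa ^+ 2 * a ^+ 2 by rewrite -ler_pdivlMr ?mulr_gt0.
move/(ler_wpM2l (ltW (mulr_gt0 eta_gt0 mu_gt0))) => eta_le'.
have sq_lt : (64 * (`|eta| * mu)) ^+ 2 * n < (`|rt| * a) ^+ 2 * n.
  rewrite !exprMn (real_normK (num_real rt)) [X in _ < X]mulrAC rt_sqr.
  have : 0 < `|eta| ^+ 2 * mu ^+ 2 * n by rewrite !mulr_gt0 ?exprn_gt0.
  lra.
have lhs_ge0 : 0 <= 64 * (`|eta| * mu) by rewrite !mulr_ge0 // ltW.
have rhs_ge0 : 0 <= `|rt| * a by rewrite mulr_ge0 // ltW.
rewrite ltr_pM2r // ltr_pXn2r ?nnegrE // in sq_lt.
by rewrite normrM (gtr0_norm mu_gt0).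
Qed.

End StepSize.

Theorem corollary5 (R : realType) (V d : nat) (hV : (2 <= V)%N) :
  exists eta0 : 'I_V -> 'cV[R]_V -> R -> R -> R -> R,
  forall (phi : 'cV[R]_d) (y ystar : 'I_V) (W : 'M[R]_(V, d)) (kappa gamma0 : R),
  let mu := fnorm phi ^+ 2 in
  let p := softmax (W *m phi) in
  let g := p - onehot R y in
  let S := p y 0 + p ystar 0 in
  let tau := 1 - S in
  let pbar := p y 0 / S in
  0 < mu -> 0 <= kappa ->
  ystar != y -> (forall j, j != y -> p j 0 <= p ystar 0) ->
  0 < gamma0 ->
  4 * Num.sqrt 2 * expR 1 ^+ 2 / p ystar 0 * tau <= gamma0 ->
  gamma0 <= Delta_bin pbar - 6 * tau ->
  0 < eta0 y p mu kappa gamma0 /\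
  forall eta rho : R,
    0 < `|eta| -> `|eta| <= 1 -> `|eta| <= eta0 y p mu kappa gamma0 ->
    `|rho| = kappa * Num.sqrt `|eta| ->
    let rt := rho_tilde rho mu g in
    let aG := alpha phi W (gd_step eta phi y W) y in
    let aS := alpha phi W (sam_step eta rho phi y W) y in
    (0 < eta * mu * rt -> aG <= aS) /\
    (0 < eta * mu * rt -> rt != 0 -> 0 < p ystar 0 < 1 -> aG < aS) /\
    (rt = 0 -> aS = aG).
Proof.
exists (fun y p mu kappa _ =>
  step_bound mu (fnorm (p - onehot R y) ^+ 2) kappa (p y 0 * (1 - p y 0) ^+ 3)).
move=> phi y ystar W kappa gamma0 mu p g S tau pbar mu_gt0 kappa_ge0 ystar_neq_y _ _ _ _.
have g_neq0 : g != 0 := softmax_sub_onehot_neq0 _ ystar_neq_y.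
have n_gt0 : 0 < fnorm g ^+ 2 by rewrite exprn_gt0 ?fnorm_gt0.
have phi_gt0 : 0 < fnorm phi.
  by rewrite lt0r fnorm_ge0 andbT; apply: contraTneq mu_gt0 => phi0; rewrite /mu phi0 expr0n ltxx.
have a_gt0 : 0 < p y 0 * (1 - p y 0) ^+ 3.
  by rewrite mulr_gt0 ?softmax_gt0 ?exprn_gt0 // subr_gt0 (softmax_lt1 _ ystar_neq_y).
split; first exact: step_bound_gt0.
move=> eta rho eta_gt0 _ eta_le rho_eq rt aG aS.
have rt_sqr : rt ^+ 2 * fnorm g ^+ 2 = rho ^+ 2 * mu by rewrite rho_tilde_sqr // ltW.
have sam_gain : 0 < eta * mu * rt -> aG < aS.
  move=> c_rt_gt0; have rt_neq0 : rt != 0 by apply: contraTneq c_rt_gt0 => ->; rewrite mulr0 ltxx.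
  have rt_sqr' : rt ^+ 2 * fnorm g ^+ 2 = kappa ^+ 2 * `|eta| * mu.
    by rewrite rt_sqr -real_normK ?num_real // rho_eq exprMn sqr_sqrtr.
  exact (alpha_gd_lt_sam g_neq0 phi_gt0 c_rt_gt0 (step_le_quarter mu_gt0 eta_le)
    (radius_le_half mu_gt0 n_gt0 eta_le rt_sqr')
    (step_dominated mu_gt0 n_gt0 a_gt0 eta_le rt_sqr' eta_gt0 rt_neq0)).
split; first by move=> /sam_gain /ltW.
split; first by move=> /sam_gain.
move=> rt0; have rho0 : rho = 0.
  apply/eqP; move: rt_sqr; rewrite rt0 expr0n mul0r => /esym/eqP.
  by rewrite mulf_eq0 sqrf_eq0 (gt_eqF mu_gt0) orbF.
by rewrite /aS /aG /sam_step /gd_step rho0 mul0r scale0r addr0.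
Qed.
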